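(* A class $\mathcal{C}$ of finite complete bipartite graphs is $\mathrm{MSO}_2$-orderable if, and only if, there is a constant $s\in\mathbb{N}$ such that for all $K_{n,m}\in\mathcal{C}$ with $n\le m$ we have $m\le 2^{s(n+1)}$.
   Context: For $G=\langle V,E\rangle$, $\lceil G\rceil=\langle V\cup E,\mathrm{inc}\rangle$ (universe $V\cup E$, incidence relation). An MSO-formula $\varphi(x,y;Z_0,\dots,Z_{k-1})$ defines an order on a class $\mathcal{K}$ of structures if for every non-empty $\mathfrak{A}\in\mathcal{K}$ there are $P_0,\dots,P_{k-1}\subseteq A$ with $\{(a,b):\mathfrak{A}\models\varphi(a,b;\bar P)\}$ a linear order on $A$. A graph class is $\mathrm{MSO}_2$-orderable if some MSO-formula defines an order on $\{\lceil G\rceil : G\in\mathcal{C}\}$. *)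

From mathcomp Require Import all_boot.
Set Implicit Arguments. Unset Strict Implicit. Unset Printing Implicit Defensive.

Definition is_edge (V : finType) (e : rel V) (E : {set V}) : bool :=
  (#|E| == 2) && [exists x, exists y, [&& x \in E, y \in E & e x y]].

Definition edge_type (V : finType) (e : rel V) : finType :=
  {E : {set V} | is_edge e E}.

(* Universe of  [G] = < V u E, inc > *)
Definition inc_univ (V : finType) (e : rel V) : finType :=
  (V + edge_type e)%type.

Definition inc (V : finType) (e : rel V) : rel (inc_univ e) :=
  fun a b => match a, b with
             | inl v, inr E => v \in val E
             | _, _ => false
             end.

Definition is_Knm (V : finType) (e : rel V) (n m : nat) : Prop :=
  exists A : {set V}, [/\ #|A| = n, #|~: A| = m &
                        forall x y, e x y = ((x \in A) != (y \in A))].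

Inductive mso : Type :=
| MRel of nat & nat
| MEq  of nat & nat
| MIn  of nat & nat
| MNot of mso
| MOr  of mso & mso
| MAnd of mso & mso
| MEx1 of nat & mso
| MAll1 of nat & mso
| MEx2 of nat & mso
| MAll2 of nat & mso.

Definition upd (A : Type) (nu : nat -> A) (i : nat) (a : A) : nat -> A :=
  fun j => if j == i then a else nu j.

Fixpoint sat (T : finType) (R : rel T) (nu1 : nat -> T) (nu2 : nat -> {set T})
  (f : mso) : Prop :=
  match f with
  | MRel x y => R (nu1 x) (nu1 y)
  | MEq x y => nu1 x = nu1 y
  | MIn x X => nu1 x \in nu2 X
  | MNot g => ~ sat R nu1 nu2 g
  | MOr g h => sat R nu1 nu2 g \/ sat R nu1 nu2 h
  | MAnd g h => sat R nu1 nu2 g /\ sat R nu1 nu2 h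
  | MEx1 x g => exists a : T, sat R (upd nu1 x a) nu2 g
  | MAll1 x g => forall a : T, sat R (upd nu1 x a) nu2 g
  | MEx2 X g => exists P : {set T}, sat R nu1 (upd nu2 X P) g
  | MAll2 X g => forall P : {set T}, sat R nu1 (upd nu2 X P) g
  end.

Fixpoint fv1 (f : mso) : seq nat :=
  match f with
  | MRel x y | MEq x y => [:: x; y]
  | MIn x _ => [:: x]
  | MNot g => fv1 g
  | MOr g h | MAnd g h => fv1 g ++ fv1 h
  | MEx1 x g | MAll1 x g => filter (fun i => i != x) (fv1 g)
  | MEx2 _ g | MAll2 _ g => fv1 g
  end.

Fixpoint fv2 (f : mso) : seq nat :=
  match f with
  | MRel _ _ | MEq _ _ => [::]
  | MIn _ X => [:: X]
  | MNot g => fv2 g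
  | MOr g h | MAnd g h => fv2 g ++ fv2 h
  | MEx1 _ g | MAll1 _ g => fv2 g
  | MEx2 X g | MAll2 X g => filter (fun i => i != X) (fv2 g)
  end.

(* phi is a formula phi(x, y; Z_0, ..., Z_{k-1}): its free first-order
   variables are among x = 0, y = 1, its free set variables among 0..k-1. *)
Definition mso_free_in (k : nat) (f : mso) : bool :=
  all (fun i => i < 2) (fv1 f) && all (fun i => i < k) (fv2 f).

Definition linear_order (T : Type) (r : T -> T -> Prop) : Prop :=
  [/\ forall a, r a a,
      forall a b, r a b -> r b a -> a = b,
      forall a b c, r a b -> r b c -> r a c &
      forall a b, r a b \/ r b a].

Definition defined_rel (T : finType) (R : rel T) (k : nat)
  (P : 'I_k -> {set T}) (f : mso) : T -> T -> Prop :=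
  fun a b =>
    sat R (fun i => if i == 0 then a else b)
          (fun i => if insub i is Some j then P j else set0) f.

Definition defines_order_inc (C : forall V : finType, rel V -> Prop)
  (k : nat) (f : mso) : Prop :=
  forall (V : finType) (e : rel V), C V e -> 0 < #|inc_univ e| ->
    exists P : 'I_k -> {set inc_univ e},
      linear_order (defined_rel (@inc V e) P f).

Definition MSO2_orderable (C : forall V : finType, rel V -> Prop) : Prop :=
  exists (k : nat) (f : mso), mso_free_in k f /\ defines_order_inc C k f.

From mathcomp Require Import all_boot.
From mathcomp Require Import zify.
Set Implicit Arguments. Unset Strict Implicit. Unset Printing Implicit Defensive.

(* Only if.  Let a formula with k parameters define a linear order on the
   incidence structure of K_{n,m}.  Exchanging two vertices b, b' of the big
   side is an automorphism of the incidence structure, and MSO satisfaction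
   is invariant under automorphisms (sat_transport).  If b and b' have the
   same profile -- which parameters contain b, and which contain each edge
   {a, b} -- the exchange fixes every parameter, so the defined order would
   be invariant under it, which is impossible for b != b'.  Thus the m big
   vertices have distinct profiles, and there are 2 ^ (k * (n + 1)) profiles.

   If.  Label the big side injectively by numbers rB b < m <= 2 ^ N, with
   N = s * (n + 1), and store the N bits of each label in s parameters: the
   first s bits on the vertex itself and s further bits on each of its n
   edges.  Two more
   parameters mark the small side A and a set of edges from which the order
   of A is definable (this uses n <= m).  A fixed formula phi s compares two
   big vertices by the first bit where their labels differ, and orders the
   incidence structure as A, then the big side, then the edges
   lexicographically. *)

Section Transport.
Variables (T : finType) (R : rel T) (sg : T -> T).
Hypothesis sgK : involutive sg.
Hypothesis sgR : forall x y, R (sg x) (sg y) = R x y.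

Lemma imset_invK (P : {set T}) : sg @: (sg @: P) = P.
Proof. by rewrite -imset_comp (eq_imset _ sgK) imset_id. Qed.

Lemma sat_transport (f : mso) (nu1 nu1' : nat -> T) (nu2 nu2' : nat -> {set T}) :
  (forall i, nu1' i = sg (nu1 i)) -> (forall i, nu2' i = sg @: nu2 i) ->
  (sat R nu1 nu2 f <-> sat R nu1' nu2' f).
Proof.
have sginj : injective sg := inv_inj sgK.
have upd1 nu nu' x a : (forall i, nu' i = sg (nu i)) ->
    forall i, upd nu' x (sg a) i = sg (upd nu x a i).
  by move=> H i; rewrite /upd; case: ifP.
have upd2 (nu nu' : nat -> {set T}) X (P : {set T}) : (forall i, nu' i = sg @: nu i) ->
    forall i, upd nu' X (sg @: P) i = sg @: upd nu X P i.
  by move=> H i; rewrite /upd; case: ifP.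
elim: f nu1 nu1' nu2 nu2' => /= [x y|x y|x X|g IH|g IHg h IHh|g IHg h IHh
  |x g IH|x g IH|X g IH|X g IH] nu1 nu1' nu2 nu2' H1 H2.
- by rewrite !H1 sgR.
- by rewrite !H1; split=> [->|/sginj].
- by rewrite H1 H2 mem_imset.
- by rewrite (IH _ _ _ _ H1 H2).
- by rewrite (IHg _ _ _ _ H1 H2) (IHh _ _ _ _ H1 H2).
- by rewrite (IHg _ _ _ _ H1 H2) (IHh _ _ _ _ H1 H2).
- split=> -[a Ha]; first by exists (sg a); apply/(IH _ _ _ _ (upd1 _ _ x a H1) H2).
  exists (sg a); rewrite -[a]sgK in Ha.
  exact/(IH _ _ _ _ (upd1 _ _ x (sg a) H1) H2).
- split=> Ha a; last exact/(IH _ _ _ _ (upd1 _ _ x a H1) H2).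
  by rewrite -[a]sgK; apply/(IH _ _ _ _ (upd1 _ _ x (sg a) H1) H2).
- split=> -[P HP]; first by exists (sg @: P); apply/(IH _ _ _ _ H1 (upd2 _ _ X P H2)).
  exists (sg @: P); rewrite -[P]imset_invK in HP.
  exact/(IH _ _ _ _ H1 (upd2 _ _ X (sg @: P) H2)).
- split=> HP P; last exact/(IH _ _ _ _ H1 (upd2 _ _ X P H2)).
  by rewrite -[P]imset_invK; apply/(IH _ _ _ _ H1 (upd2 _ _ X (sg @: P) H2)).
Qed.

End Transport.

Lemma set2_of (T : finType) (E : {set T}) a c :
  #|E| = 2 -> a != c -> a \in E -> c \in E -> E = [set a; c].
Proof.
move=> HE ac Ha Hc; apply/eqP; rewrite eq_sym eqEcard subUset !sub1set Ha Hc /=.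
by rewrite cards2 ac HE.
Qed.

Lemma edge_uniq (V : finType) (e : rel V) (E F : edge_type e) a c :
  a != c -> a \in val E -> c \in val E -> a \in val F -> c \in val F -> E = F.
Proof.
move=> ac aE cE aF cF; apply: val_inj.
case: E aE cE => E /= /andP[/eqP c2 _] aE cE.
case: F aF cF => F /= /andP[/eqP c2' _] aF cF.
by rewrite (set2_of c2 ac aE cE) (set2_of c2' ac aF cF).
Qed.

Section Bipartite.
Variables (V : finType) (e : rel V) (A : {set V}).
Hypothesis hA : forall x y, e x y = ((x \in A) != (y \in A)).

Lemma edge_shape (E : edge_type e) :
  exists a b, [/\ a \in A, b \notin A & val E = [set a; b]].
Proof.
case: E => E /= /andP[/eqP c2 /existsP[x /existsP[y /and3P[xE yE exy]]]].
have xy : x != y by apply: contraTneq exy => ->; rewrite hA eqxx.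
rewrite (set2_of c2 xy xE yE); move: exy; rewrite hA.
case xA: (x \in A); case yA: (y \in A) => // _; first by exists x, y; rewrite xA yA.
by exists y, x; rewrite yA xA setUC.
Qed.

Lemma is_edge_ab a b : a \in A -> b \notin A -> is_edge e [set a; b].
Proof.
move=> aA bA; have ab : a != b by apply: contraNneq bA => <-.
apply/andP; split; first by rewrite cards2 ab.
apply/existsP; exists a; apply/existsP; exists b.
by rewrite !inE !eqxx orbT hA aA (negPf bA).
Qed.

Definition edge_of a b (aA : a \in A) (bA : b \notin A) : edge_type e :=
  Sub [set a; b] (is_edge_ab aA bA).

Lemma edge_of_onto (E : edge_type e) :
  exists a b (aA : a \in A) (bA : b \notin A), E = edge_of aA bA.
Proof.
have [a [b [aA bA HE]]] := edge_shape E.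
by exists a, b, aA, bA; apply: val_inj; rewrite HE.
Qed.

Lemma set2_endA a b c : b \notin A -> c \in A -> c \in [set a; b] -> c = a.
Proof. by move=> bA cA; rewrite !inE => /orP[/eqP //|/eqP cb]; move: bA; rewrite -cb cA. Qed.

Lemma set2_endB a b c : a \in A -> c \notin A -> c \in [set a; b] -> c = b.
Proof. by move=> aA cA; rewrite !inE => /orP[/eqP ca|/eqP //]; move: cA; rewrite ca aA. Qed.

Lemma edge_between a b (aA : a \in A) (bA : b \notin A) (u : inc_univ e) :
  inc (inl a) u -> inc (inl b) u -> u = inr (edge_of aA bA).
Proof.
have ab : a != b by apply: contraNneq bA => <-.
case: u => // E /= aE bE; congr inr.
by apply: (edge_uniq ab aE bE); rewrite !inE eqxx ?orbT.
Qed.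

(* The profile of a vertex v outside A with respect to parameters P: which
   P_j contain v, and which P_j contain the edge {a, v}, for every a in A.
   There are at most 2 ^ (k * (#|A| + 1)) profiles. *)
Definition profile k (P : 'I_k -> {set inc_univ e}) (v : V) :
    {ffun 'I_k * option {x | x \in A} -> bool} :=
  [ffun p => match p.2 with
             | None => (inl v : inc_univ e) \in P p.1
             | Some a => [exists E : edge_type e,
                 [&& val a \in val E, v \in val E & (inr E : inc_univ e) \in P p.1]]
             end].

Lemma profile_edge k (P : 'I_k -> {set inc_univ e}) j a c (aA : a \in A) (cA : c \notin A) :
  ((inr (edge_of aA cA) : inc_univ e) \in P j) = profile P c (j, Some (exist _ a aA)).
Proof.
rewrite ffunE /=; apply/idP/existsP => [H|[F /and3P[aF cF HF]]].
  by exists (edge_of aA cA); rewrite !inE !eqxx orbT H.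
by rewrite -(edge_between aA cA (u := inr F)).
Qed.

Section Swap.
Variables (b b' : V).
Hypotheses (bA : b \notin A) (b'A : b' \notin A).

Definition swap v := if v == b then b' else if v == b' then b else v.

Lemma swapK : involutive swap.
Proof.
move=> v; rewrite /swap.
case: (eqVneq v b) => [->|vb]; first by rewrite eqxx; case: eqVneq.
case: (eqVneq v b') => [->|vb']; first by rewrite eqxx.
by rewrite (negPf vb) (negPf vb').
Qed.

Lemma swap_inj : injective swap. Proof. exact: inv_inj swapK. Qed.

Lemma swapA v : (swap v \in A) = (v \in A).
Proof.
by rewrite /swap; case: eqVneq => [->|_]; [|case: eqVneq => [->|_]];
  rewrite ?(negPf bA) ?(negPf b'A).
Qed.

Lemma swap_fixA a : a \in A -> swap a = a.
Proof.
move=> aA; rewrite /swap; case: eqVneq => [ab|_]; first by move: bA; rewrite -ab aA.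
by case: eqVneq => [ab'|_] //; move: b'A; rewrite -ab' aA.
Qed.

Lemma is_edge_swap (E : edge_type e) : is_edge e (swap @: val E).
Proof.
case: E => E /= /andP[c2 /existsP[x /existsP[y /and3P[xE yE exy]]]].
apply/andP; split; first by rewrite card_imset //; exact: swap_inj.
apply/existsP; exists (swap x); apply/existsP; exists (swap y).
by rewrite !(mem_imset _ _ swap_inj) xE yE hA !swapA -hA.
Qed.

Definition swap_inc (u : inc_univ e) : inc_univ e :=
  match u with
  | inl v => inl (swap v)
  | inr E => inr (Sub (swap @: val E) (is_edge_swap E))
  end.

Lemma swap_incK : involutive swap_inc.
Proof.
case=> [v|E] /=; first by rewrite swapK.
by congr inr; apply: val_inj; rewrite /= -imset_comp (eq_imset _ swapK) imset_id.
Qed.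

Lemma swap_inc_inc x y : inc (swap_inc x) (swap_inc y) = inc x y.
Proof. by case: x => [v|E]; case: y => [w|F] //=; rewrite mem_imset //; exact: swap_inj. Qed.

Lemma swap_inc_edge a c (aA : a \in A) (cA : c \notin A) (scA : swap c \notin A) :
  swap_inc (inr (edge_of aA cA)) = inr (edge_of aA scA).
Proof. by congr inr; apply: val_inj; rewrite /= imsetU1 imset_set1 swap_fixA. Qed.

Section SameProfile.
Variables (k : nat) (P : 'I_k -> {set inc_univ e}).
Hypothesis same_profile : profile P b = profile P b'.

Lemma profile_swap c : profile P (swap c) = profile P c.
Proof. by rewrite /swap; case: eqVneq => [->|_]; last case: eqVneq => [->|_]. Qed.

Lemma swap_param j u : (swap_inc u \in P j) = (u \in P j).
Proof.
case: u => [v|E].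
  by have /ffunP/(_ (j, None)) := profile_swap v; rewrite !ffunE.
have [a [c [aA [cA ->]]]] := edge_of_onto E.
have scA : swap c \notin A by rewrite swapA.
by rewrite swap_inc_edge !profile_edge profile_swap.
Qed.

Lemma swap_params j : swap_inc @: P j = P j.
Proof.
apply/setP => u; rewrite -[u in LHS]swap_incK mem_imset ?swap_param //.
exact: inv_inj swap_incK.
Qed.

Lemma same_profile_unordered f : b != b' ->
  ~ linear_order (defined_rel (@inc V e) P f).
Proof.
move=> bb' [_ antisym _ total].
have swapped x y : defined_rel (@inc V e) P f x y ->
    defined_rel (@inc V e) P f (swap_inc x) (swap_inc y).
  apply: (proj1 (sat_transport swap_incK swap_inc_inc _ _ _)) => i.
    by case: ifP.
  by case: insubP => [j _ _|_]; rewrite ?swap_params ?imset0.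
have sb : swap_inc (inl b) = inl b' by rewrite /= /swap eqxx.
have sb' : swap_inc (inl b') = inl b by rewrite /= /swap eq_sym (negPf bb') eqxx.
have [H|H] := total (inl b) (inl b');
  have := swapped _ _ H; rewrite sb sb' => H';
  by have [] := antisym _ _ H H'; apply/eqP; rewrite // eq_sym.
Qed.

End SameProfile.
End Swap.

(* A linear order defined with k parameters forces the profiles of the
   vertices outside A to be pairwise distinct, which bounds their number. *)
Lemma big_side_bound k (P : 'I_k -> {set inc_univ e}) (f : mso) :
  linear_order (defined_rel (@inc V e) P f) -> #|~: A| <= 2 ^ (k * (#|A| + 1)).
Proof.
move=> ordered.
pose pr (x : {x | x \in ~: A}) := profile P (val x).
have [/injectiveP pr_inj|/injectivePn [x [y xy pxy]]] := boolP (injectiveb pr).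
  have := leq_card _ pr_inj.
  by rewrite card_sig card_ffun card_bool card_prod card_ord card_option card_sig addn1.
have xA : val x \notin A by have := valP x; rewrite inE.
have yA : val y \notin A by have := valP y; rewrite inE.
by have [] := same_profile_unordered xA yA pxy (contra_neq (@val_inj _ _ _ x y) xy) ordered.
Qed.

End Bipartite.

Lemma orderable_bounded (C : forall V : finType, rel V -> Prop) :
  MSO2_orderable C ->
  exists s : nat, forall (V : finType) (e : rel V) (n m : nat),
    C V e -> is_Knm e n m -> n <= m -> m <= 2 ^ (s * (n + 1)).
Proof.
move=> [k [f [_ orders]]]; exists k => V e n m CVe [A [<- hm hA]] nm.
case: m hm nm => [//|m] hm _.
have nonempty : 0 < #|inc_univ e|.
  rewrite card_sum; apply: leq_trans (leq_addr _ _).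
  by apply: leq_trans (max_card (mem (~: A))); rewrite hm.
have [P ordered] := orders V e CVe nonempty.
by rewrite -hm; exact: (big_side_bound hA ordered).
Qed.

Definition bitn (x i : nat) : bool := odd (x %/ 2 ^ i).

Lemma bitn_eq N X Y : X < 2 ^ N -> Y < 2 ^ N ->
  (forall i, i < N -> bitn X i = bitn Y i) -> X = Y.
Proof.
elim: N X Y => [|N IH] X Y; first by rewrite expn0 !ltnS !leqn0 => /eqP-> /eqP->.
move=> HX HY same.
have lowbit : odd X = odd Y by have := same 0 isT; rewrite /bitn expn0 !divn1.
rewrite -[X]odd_double_half -[Y]odd_double_half lowbit (IH X./2 Y./2) //.
- by rewrite -divn2 ltn_divLR // -expnSr.
- by rewrite -divn2 ltn_divLR // -expnSr.
by move=> i iN; have := same i.+1 iN; rewrite /bitn -!divn2 -!divnMA expnS mulnC.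
Qed.

Definition diff_at (bx by_ : nat -> bool) (i : nat) : Prop :=
  ~ bx i /\ by_ i /\ forall i', i' < i -> bx i' = by_ i'.

Definition first_diff N X Y : bool :=
  [exists i : 'I_N, [&& ~~ bitn X i, bitn Y i &
    [forall i' : 'I_N, (i' < i) ==> (bitn X i' == bitn Y i')]]].

Lemma first_diffP N X Y :
  reflect (exists2 i, i < N & diff_at (bitn X) (bitn Y) i) (first_diff N X Y).
Proof.
apply: (iffP existsP) => [[i /and3P[/negP h1 h2 /forallP h3]]|[i iN [/negP h1 [h2 h3]]]].
  exists i => //; split => //; split => // i' i'i; have i'N : i' < N by apply: ltn_trans i'i _.
  by have /implyP/(_ i'i)/eqP := h3 (Ordinal i'N).
exists (Ordinal iN); rewrite h1 h2; apply/forallP => i'; apply/implyP => H.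
by rewrite (h3 _ H).
Qed.

Lemma first_diff_irr N X : ~~ first_diff N X X.
Proof. by apply/first_diffP => -[i _ [nX [/nX]]]. Qed.

Lemma first_diff_trans N X Y Z : first_diff N X Y -> first_diff N Y Z -> first_diff N X Z.
Proof.
move=> /first_diffP[i iN [h1 [h2 h3]]] /first_diffP[i' i'N [h1' [h2' h3']]].
apply/first_diffP; case: (ltngtP i i') => [ii'|i'i|same]; last by move: h1'; rewrite -same h2.
- exists i => //; rewrite /diff_at -(h3' _ ii'); split => //; split => //.
  by move=> k ki; rewrite h3 // h3' // (ltn_trans ki ii').
- exists i' => //; rewrite /diff_at h3 //; split => //; split => //.
  by move=> k ki; rewrite h3 ?h3' // (ltn_trans ki i'i).
Qed.

Lemma first_diff_total N X Y : X < 2 ^ N -> Y < 2 ^ N -> X != Y ->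
  first_diff N X Y || first_diff N Y X.
Proof.
move=> HX HY XY.
have ex : exists i, (i < N) && (bitn X i != bitn Y i).
  have /existsP[i Hi] : [exists i : 'I_N, bitn X i != bitn Y i].
    apply: contraR XY => /existsPn diff; apply/eqP/(bitn_eq HX HY) => i iN.
    by apply/eqP; have := diff (Ordinal iN); rewrite negbK.
  by exists i; rewrite ltn_ord.
case: (ex_minnP ex) => i /andP[iN Hd] minimal.
have agree i' : i' < i -> bitn X i' = bitn Y i'.
  move=> i'i; apply/eqP/negPn/negP => Hd'.
  by have := minimal i'; rewrite Hd' (ltn_trans i'i iN) leqNgt i'i => /(_ isT).
by move: Hd; case bX: (bitn X i); case bY: (bitn Y i) => // _;
  apply/orP; [right|left]; apply/first_diffP; exists i => //;
  rewrite /diff_at ?bX ?bY; split => //; split => // k /agree ->.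
Qed.

(* Positions below s * (n + 1) split into an initial block [0, s) and n
   further blocks of length s; block q + 1 consists of the s * q.+1 + j. *)
Lemma block_split s i : s <= i -> 0 < s -> exists q j, j < s /\ i = s * q.+1 + j.
Proof.
move=> si s0; exists (i %/ s).-1, (i %% s); split; first by rewrite ltn_mod.
by rewrite prednK ?divn_gt0 // mulnC -divn_eq.
Qed.

Lemma block_decomp s n i : i < s * (n + 1) ->
  i < s \/ exists q j, [/\ q < n, j < s & i = s * q.+1 + j].
Proof.
move=> iN; case: (ltnP i s) => si; [by left|right].
have [|q [j [js Ei]]] := block_split si; first by case: s iN si => //; rewrite mul0n.
exists q, j; split => //; rewrite Ei addn1 in iN.
have : s * q.+1 < s * n.+1 by lia.
by rewrite ltn_mul2l ltnS => /andP[].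
Qed.

Lemma block_below s q j (P : nat -> Prop) : j < s ->
  (forall i, i < s * q.+1 + j -> P i) <->
  (forall j', j' < s -> P j') /\
  (forall q' j', q' < q -> j' < s -> P (s * q'.+1 + j')) /\
  (forall j', j' < j -> P (s * q.+1 + j')).
Proof.
move=> js; split=> [H|[h0 [hq hj]] i ib].
  by split; [|split]; move=> *; apply: H; nia.
case: (ltnP i s) => si; first exact: h0.
have [q' [j' [j's Ei]]] := block_split si (leq_ltn_trans (leq0n j) js).
rewrite {}Ei in ib *.
have [q'q|q'q] := ltnP q' q; first exact: hq.
have -> : q' = q by nia.
by apply: hj; nia.
Qed.

Section Rank.
Variables (T : finType) (D : {pred T}) (lt : rel T).
Hypothesis lt_irr : forall x, ~~ lt x x.
Hypothesis lt_trans : forall x y z, lt x y -> lt y z -> lt x z.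
Hypothesis lt_total : {in D &, forall x y, x != y -> lt x y || lt y x}.

Definition rank x := #|[set y in D | lt y x]|.

Lemma rank_mono x y : x \in D -> lt x y -> rank x < rank y.
Proof.
move=> xD lxy; apply: proper_card; apply/properP; split.
  by apply/subsetP => z; rewrite !inE => /andP[-> /= /lt_trans]; apply.
by exists x; rewrite !inE ?xD ?lxy ?(negPf (lt_irr x)).
Qed.

Lemma rank_lt x y : x \in D -> y \in D -> lt x y = (rank x < rank y).
Proof.
move=> xD yD; apply/idP/idP; first exact: rank_mono.
move=> H; case: (eqVneq x y) => [exy|nxy]; first by move: H; rewrite exy ltnn.
have /orP[//|lyx] := lt_total xD yD nxy.
by have := rank_mono yD lyx; rewrite ltnNge (ltnW H).
Qed.

Lemma rank_inj x y : x \in D -> y \in D -> rank x = rank y -> x = y.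
Proof.
move=> xD yD same; apply/eqP; apply: contraT => /(lt_total xD yD) /orP[] H;
  by move: H; rewrite rank_lt // same ltnn.
Qed.

Lemma rank_bound x : x \in D -> rank x < #|D|.
Proof.
move=> xD; rewrite -cardsE; apply: proper_card; apply/properP; split.
  by apply/subsetP => z; rewrite !inE => /andP[].
by exists x; rewrite !inE ?xD // (negPf (lt_irr x)).
Qed.

End Rank.

Section EnumIndex.
Variables (T : finType) (S : {set T}).

Lemma index_enum_lt v : v \in S -> index v (enum S) < #|S|.
Proof. by move=> vS; rewrite cardE index_mem mem_enum. Qed.

Lemma index_enum_inj v w : v \in S -> w \in S ->
  index v (enum S) = index w (enum S) -> v = w.
Proof. by move=> vS wS; apply: (index_inj v); rewrite mem_enum. Qed.

Lemma index_enum_onto q : q < #|S| -> exists2 v, v \in S & index v (enum S) = q.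
Proof.
move=> qS; have qs : q < size (enum S) by rewrite -cardE.
have /card_gt0P[x0 _] : 0 < #|S| by apply: leq_ltn_trans qS.
exists (nth x0 (enum S) q); first by have := mem_nth x0 qs; rewrite mem_enum.
by rewrite index_uniq ?enum_uniq.
Qed.

End EnumIndex.

Lemma mixed_radix_le d q r q' r' : r < d -> r' < d ->
  (q * d + r <= q' * d + r') = (q < q') || ((q == q') && (r <= r')).
Proof.
move=> rd r'd; case: (ltngtP q q') => [qq|qq|->] /=; last by rewrite leq_add2l.
- apply/idP; apply: leq_trans (ltnW (_ : q * d + r < q.+1 * d)) _.
    by rewrite mulSn addnC ltn_add2r.
  by apply: leq_trans (leq_addr _ _); rewrite leq_mul2r qq orbT.
- apply/negbTE; rewrite -ltnNge; apply: leq_trans (_ : q'.+1 * d <= q * d + r).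
    by rewrite mulSn addnC ltn_add2r.
  by apply: leq_trans (leq_addr _ _); rewrite leq_mul2r qq orbT.
Qed.

Lemma mixed_radix_inj d q r q' r' : r < d -> r' < d ->
  q * d + r = q' * d + r' -> q = q' /\ r = r'.
Proof.
move=> rd r'd same; have d0 : 0 < d by apply: leq_ltn_trans rd.
split; [move: (congr1 (divn^~ d) same)|move: (congr1 (modn^~ d) same)];
  by rewrite /= ?divnMDl ?modnMDl // ?divn_small ?modn_small // !addn0.
Qed.

(* Over a finite type, a pointwise decidable predicate has a decidable
   existential closure.  Hence satisfaction on finite structures is
   decidable, and MSO implication behaves classically. *)
Lemma fin_exists_dec (T : finType) (P : T -> Prop) :
  (forall x, P x \/ ~ P x) -> (exists x, P x) \/ (forall x, ~ P x).
Proof.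
move=> dec; suff /(_ (enum T)) [[x _ Px]|none] :
    forall r : seq T, (exists2 x, x \in r & P x) \/ (forall x, x \in r -> ~ P x).
- by left; exists x.
- by right=> x; apply: none; rewrite mem_enum.
elim=> [|y r [[x xr Px]|none]]; first by right.
  by left; exists x; rewrite // inE xr orbT.
case: (dec y) => [Py|nPy]; first by left; exists y; rewrite ?inE ?eqxx.
by right=> x; rewrite inE => /orP[/eqP->|/none].
Qed.

Lemma sat_dec (T : finType) (R : rel T) f nu1 nu2 :
  sat R nu1 nu2 f \/ ~ sat R nu1 nu2 f.
Proof.
have fin_forall_dec (U : finType) (P : U -> Prop) : (forall x, P x \/ ~ P x) ->
    (forall x, P x) \/ ~ (forall x, P x).
  move=> dec; case: (@fin_exists_dec U (fun x => ~ P x)) => [x|[x nPx]|all].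
  - by case: (dec x); [right|left].
  - by right=> /(_ x).
  - by left=> x; case: (dec x) => // /all.
elim: f nu1 nu2 => /= [x y|x y|x X|g IH|g IHg h IHh|g IHg h IHh
  |x g IH|x g IH|X g IH|X g IH] nu1 nu2.
- by case: (R _ _); [left|right].
- by case: (eqVneq (nu1 x) (nu1 y)) => [->|/eqP]; [left|right].
- by case: (_ \in _); [left|right].
- by case: (IH nu1 nu2); [right|left].
- by case: (IHg nu1 nu2); case: (IHh nu1 nu2); tauto.
- by case: (IHg nu1 nu2); case: (IHh nu1 nu2); tauto.
- by case: (fin_exists_dec (fun a => IH (upd nu1 x a) nu2)) => [|none];
    [left|right=> -[a /none]].
- exact: fin_forall_dec (fun a => IH (upd nu1 x a) nu2).
- by case: (fin_exists_dec (fun P => IH nu1 (upd nu2 X P))) => [|none];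
    [left|right=> -[P /none]].
- exact: fin_forall_dec (fun P => IH nu1 (upd nu2 X P)).
Qed.

Definition MTrue := MEq 0 0.
Definition MImp f g := MOr (MNot f) g.
Definition MIff f g := MAnd (MImp f g) (MImp g f).

Fixpoint bigAnd (fs : seq mso) : mso :=
  if fs is f :: fs' then MAnd f (bigAnd fs') else MTrue.
Fixpoint bigOr (fs : seq mso) : mso :=
  if fs is f :: fs' then MOr f (bigOr fs') else MNot MTrue.

Section DerivedSemantics.
Variables (T : finType) (R : rel T) (nu1 : nat -> T) (nu2 : nat -> {set T}).

Lemma sat_imp f g : sat R nu1 nu2 (MImp f g) <-> (sat R nu1 nu2 f -> sat R nu1 nu2 g).
Proof. by have := sat_dec R f nu1 nu2; rewrite /=; tauto. Qed.

Lemma sat_iff f g : sat R nu1 nu2 (MIff f g) <-> (sat R nu1 nu2 f <-> sat R nu1 nu2 g).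
Proof. by have := sat_dec R f nu1 nu2; have := sat_dec R g nu1 nu2; rewrite /=; tauto. Qed.

Lemma sat_bigAnd (g : nat -> mso) (l : seq nat) :
  sat R nu1 nu2 (bigAnd (map g l)) <-> (forall j, j \in l -> sat R nu1 nu2 (g j)).
Proof.
elim: l => [|j l IH] /=; first by split.
rewrite IH; split => [[H1 H2] i|H]; first by rewrite inE => /orP[/eqP->|/H2].
by split => [|i il]; apply: H; rewrite inE ?eqxx ?il ?orbT.
Qed.

Lemma sat_bigOr (g : nat -> mso) (l : seq nat) :
  sat R nu1 nu2 (bigOr (map g l)) <-> (exists2 j, j \in l & sat R nu1 nu2 (g j)).
Proof.
elim: l => [|j l IH] /=; first by split => [[]|[]].
rewrite IH; split => [[H|[i il H]]|[i]]; first by exists j; rewrite ?inE ?eqxx.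
  by exists i; rewrite // inE il orbT.
by rewrite inE => /orP[/eqP-> H|il H]; [left|right; exists i].
Qed.

End DerivedSemantics.

Lemma updE (A : Type) (nu : nat -> A) x a : upd nu x a x = a.
Proof. by rewrite /upd eqxx. Qed.

Lemma updN (A : Type) (nu : nat -> A) x y a : y != x -> upd nu x a y = nu y.
Proof. by rewrite /upd => /negPf->. Qed.

Lemma bool_iff (b1 b2 : bool) : (b1 <-> b2) <-> b1 = b2.
Proof. by split => [[h1 h2]|->]; [apply/idP/idP|]. Qed.

Section Construction.
Variables (V : finType) (e : rel V) (A : {set V}).
Hypothesis hA : forall x y, e x y = ((x \in A) != (y \in A)).
Variable s : nat.
Local Notation n := #|A|.
Local Notation m := #|~: A|.
Local Notation N := (s * (n + 1)).
Local Notation U := (inc_univ e).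
Local Notation edge := (edge_of hA).
Hypothesis nm : n <= m.
Hypothesis mbound : m <= 2 ^ N.

Definition rA v := index v (enum A).
Definition rB v := index v (enum (~: A)).

Lemma rA_lt a : a \in A -> rA a < n.
Proof. exact: index_enum_lt. Qed.

Lemma rB_lt b : b \notin A -> rB b < m.
Proof. by move=> bA; apply: index_enum_lt; rewrite inE. Qed.

Lemma rA_inj a a' : a \in A -> a' \in A -> rA a = rA a' -> a = a'.
Proof. exact: index_enum_inj. Qed.

Lemma rB_inj b b' : b \notin A -> b' \notin A -> rB b = rB b' -> b = b'.
Proof. by move=> bA b'A; apply: index_enum_inj; rewrite inE. Qed.

Lemma rA_onto q : q < n -> exists2 a, a \in A & rA a = q.
Proof. exact: index_enum_onto. Qed.

Lemma rB_onto q : q < m -> exists2 b, b \notin A & rB b = q.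
Proof. by move/index_enum_onto => [b]; rewrite inE; exists b. Qed.

Definition sort (u : U) : nat := if u is inl v then (if v \in A then 0 else 1) else 2.

Lemma sort_cases u : [\/ sort u = 0, sort u = 1 | sort u = 2].
Proof. by case: u => [v|E] /=; [case: ifP; [constructor 1|constructor 2]|constructor 3]. Qed.

Lemma sort_A a : a \in A -> sort (inl a) = 0. Proof. by move=> /= ->. Qed.
Lemma sort_B b : b \notin A -> sort (inl b) = 1. Proof. by move=> /= /negPf->. Qed.

Definition edges_with (P : V -> V -> bool) : {set U} :=
  [set u : U | if u is inr E then
     [exists p : V * V,
        [&& p.1 \in A, p.2 \notin A, p.1 \in val E, p.2 \in val E & P p.1 p.2]]
   else false].

Lemma edges_withE P a b (aA : a \in A) (bA : b \notin A) :
  (inr (edge aA bA) \in edges_with P) = P a b.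
Proof.
rewrite inE; apply/existsP/idP => [[[a' b'] /and5P[/= a'A b'A a'E b'E]]|H].
  by rewrite (set2_endA bA a'A a'E) (set2_endB aA b'A b'E).
by exists (a, b); rewrite /= aA bA !inE !eqxx orbT H.
Qed.

(* The parameters: the side A; the edges {a, b} with rB b <= rA a, from
   which the order of A is recovered (this uses n <= m); and for j < s the
   j-th bit set, storing bit j of rB b on each vertex b outside A and bit
   s * q.+1 + j of rB b on the edge joining b to the q-th vertex of A. *)
Definition side_param : {set U} := [set u | sort u == 0].

Definition rank_param : {set U} := edges_with (fun a b => rB b <= rA a).

Definition bit_param j : {set U} :=
  [set u : U | if u is inl v then (v \notin A) && bitn (rB v) j else false]
  :|: edges_with (fun a b => bitn (rB b) (s * (rA a).+1 + j)).

Lemma bit_param_vertex j b : b \notin A -> (inl b \in bit_param j) = bitn (rB b) j.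
Proof. by move=> bA; rewrite !inE bA /= orbF. Qed.

Lemma bit_param_edge j a b (aA : a \in A) (bA : b \notin A) :
  (inr (edge aA bA) \in bit_param j) = bitn (rB b) (s * (rA a).+1 + j).
Proof. by rewrite in_setU edges_withE inE. Qed.

(* Vertices outside A are compared by the first-difference
   order of their labels rB, strict and total as the labels are distinct
   numbers below 2 ^ N; kB is the rank in this order.  The whole order lists
   A by rA, then the other vertices by kB, then the edges {a, b} by
   (kB b, rA a) lexicographically; key is the position in it. *)
Definition ltB (v w : V) : bool := first_diff N (rB v) (rB w).

Lemma ltB_irr v : ~~ ltB v v. Proof. exact: first_diff_irr. Qed.

Lemma ltB_trans u v w : ltB u v -> ltB v w -> ltB u w.
Proof. exact: first_diff_trans. Qed.

Lemma ltB_total : {in ~: A &, forall v w, v != w -> ltB v w || ltB w v}.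
Proof.
move=> v w; rewrite !inE => vA wA vw; apply: first_diff_total.
- exact: leq_trans (rB_lt vA) mbound.
- exact: leq_trans (rB_lt wA) mbound.
- by apply: contra vw => /eqP/(rB_inj vA wA)->.
Qed.

Definition kB (v : V) : nat := rank (~: A) ltB v.

Lemma kB_lt v w : v \notin A -> w \notin A -> ltB v w = (kB v < kB w).
Proof. by move=> vA wA; apply: (rank_lt ltB_irr ltB_trans ltB_total); rewrite inE. Qed.

Lemma kB_inj v w : v \notin A -> w \notin A -> kB v = kB w -> v = w.
Proof. by move=> vA wA; apply: (rank_inj ltB_irr ltB_trans ltB_total); rewrite inE. Qed.

Lemma kB_bound v : v \notin A -> kB v < m.
Proof. by move=> vA; apply: (rank_bound ltB_irr); rewrite inE. Qed.

Definition edge_ends (E : edge_type e) : option (V * V) :=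
  [pick p : V * V | [&& p.1 \in A, p.2 \notin A, p.1 \in val E & p.2 \in val E]].

Definition key (u : U) : nat :=
  match u with
  | inl v => if v \in A then rA v else n + kB v
  | inr E => if edge_ends E is Some p then n + m + (kB p.2 * n + rA p.1) else 0
  end.

Lemma key_A a : a \in A -> key (inl a) = rA a.
Proof. by move=> /= ->. Qed.

Lemma key_B b : b \notin A -> key (inl b) = n + kB b.
Proof. by move=> /= /negPf->. Qed.

Lemma key_edge a b (aA : a \in A) (bA : b \notin A) :
  key (inr (edge aA bA)) = n + m + (kB b * n + rA a).
Proof.
rewrite /= /edge_ends; case: pickP => [[a' b'] /and4P[/= a'A b'A a'E b'E]|/(_ (a, b))].
  by rewrite (set2_endA bA a'A a'E) (set2_endB aA b'A b'E).
by rewrite /= aA bA !inE !eqxx orbT.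
Qed.

Lemma key_sort u w : sort u < sort w -> key u < key w.
Proof.
have keyV v : key (inl v) < n + m.
  have [vA|vA] := boolP (v \in A); first by rewrite key_A // ltn_addr ?rA_lt.
  by rewrite key_B // ltn_add2l kB_bound.
have keyE E : n + m <= key (inr E).
  by have [a [b [aA [bA ->]]]] := edge_of_onto hA E; rewrite key_edge leq_addr.
case: u => [v|E]; case: w => [v'|E'] //.
- by rewrite /=; case vA: (v \in A); case: (v' \in A) => // _; rewrite ltn_addr ?rA_lt.
- by move=> _; exact: leq_trans (keyV v) (keyE E').
- by rewrite /=; case: ifP.
Qed.

Lemma key_inj : injective key.
Proof.
move=> u w same_key; have same_sort : sort u = sort w.
  by case: (ltngtP (sort u) (sort w)) => // /key_sort; rewrite same_key ltnn.
case: u w same_sort same_key => [v|E] [v'|E'].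
- rewrite /=; case vA: (v \in A); case v'A: (v' \in A) => // _.
    by move/(rA_inj vA v'A)->.
  by move/addnI/(kB_inj (negbT vA) (negbT v'A))->.
- by rewrite /=; case: ifP.
- by rewrite /=; case: ifP.
- have [a [b [aA [bA ->]]]] := edge_of_onto hA E.
  have [a' [b' [a'A [b'A ->]]]] := edge_of_onto hA E'.
  rewrite !key_edge => _ /addnI same.
  have [/(kB_inj bA b'A) eb /(rA_inj aA a'A) ea] :=
    mixed_radix_inj (rA_lt aA) (rA_lt a'A) same.
  by subst; congr inr; apply: val_inj.
Qed.

(* First-order variables 0 and 1 are the free variables x, y;
   each formula template below quantifies its own auxiliary variable among
   100 .. 104, and the edge comparison uses 10 .. 13; the semantic lemmas
   require the arguments of a template to avoid the variables it binds.
   Set variable 0 holds side_param, 1 holds rank_param and j + 2 holds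
   bit_param j. *)
Lemma notin2 (x a b : nat) : x \notin [:: a; b] -> x != a /\ x != b.
Proof. by rewrite mem_seq2 => /norP. Qed.

Lemma notin3 (x a b c : nat) : x \notin [:: a; b; c] -> [/\ x != a, x != b & x != c].
Proof. by rewrite mem_seq3 => /norP[? /norP[]]. Qed.

Definition isAf x := MIn x 0.
Definition isEf x := MEx1 100 (MRel 100 x).
Definition isBf x := MAnd (MNot (isAf x)) (MNot (isEf x)).
Definition edge_inf X a b :=
  MEx1 101 (MAnd (MRel a 101) (MAnd (MRel b 101) (MIn 101 X))).
Definition leAf x y :=
  MAll1 102 (MImp (isBf 102) (MImp (edge_inf 1 x 102) (edge_inf 1 y 102))).
Definition ltAf x y := MAnd (leAf x y) (MNot (MEq x y)).
Definition bitBf x j := MIn x j.+2.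
Definition bitEf p x j := edge_inf j.+2 p x.
Definition agreeBf x y j := MIff (bitBf x j) (bitBf y j).
Definition agreeEf p x y j := MIff (bitEf p x j) (bitEf p y j).
(* x precedes y in the first-difference order of the labels rB: either they
   first differ at a vertex bit j < s, or in the block of some p in A, having
   agreed on the vertex bits and on the blocks of all p' before p *)
Definition diffBf x y := bigOr [seq MAnd (MNot (bitBf x j))
  (MAnd (bitBf y j) (bigAnd [seq agreeBf x y j' | j' <- iota 0 j])) | j <- iota 0 s].
Definition earlierf x y := MAll1 104 (MImp (isAf 104) (MImp (ltAf 104 103)
  (bigAnd [seq agreeEf 104 x y j | j <- iota 0 s]))).
Definition diffE_at x y j := MAnd (MNot (bitEf 103 x j)) (MAnd (bitEf 103 y j)
  (MAnd (bigAnd [seq agreeBf x y j' | j' <- iota 0 s])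
  (MAnd (earlierf x y) (bigAnd [seq agreeEf 103 x y j' | j' <- iota 0 j])))).
Definition diffEf x y :=
  MEx1 103 (MAnd (isAf 103) (bigOr [seq diffE_at x y j | j <- iota 0 s])).
Definition ltBf x y := MOr (diffBf x y) (diffEf x y).
Definition endsf z a b := MAnd (isAf a) (MAnd (isBf b) (MAnd (MRel a z) (MRel b z))).
Definition leEf x y := MEx1 10 (MEx1 11 (MEx1 12 (MEx1 13
  (MAnd (endsf x 10 11) (MAnd (endsf y 12 13)
  (MOr (ltBf 11 13) (MAnd (MEq 11 13) (leAf 10 12)))))))).
Definition sort_ltf := MOr (MAnd (isAf 0) (MNot (isAf 1))) (MAnd (isBf 0) (isEf 1)).
Definition same_sort_lef :=
  MOr (MAnd (isAf 0) (MAnd (isAf 1) (leAf 0 1)))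
 (MOr (MAnd (isBf 0) (MAnd (isBf 1) (MOr (MEq 0 1) (ltBf 0 1))))
      (MAnd (isEf 0) (MAnd (isEf 1) (leEf 0 1)))).
Definition phi := MOr sort_ltf same_sort_lef.

Section Semantics.
Variable nu2 : nat -> {set U}.
Hypothesis nu2_side : nu2 0 = side_param.
Hypothesis nu2_rank : nu2 1 = rank_param.
Hypothesis nu2_bit : forall j, j < s -> nu2 j.+2 = bit_param j.
Local Notation sat := (sat (@inc V e)).

Lemma s_isA nu x : sat nu nu2 (isAf x) <-> sort (nu x) = 0.
Proof. by rewrite /= nu2_side inE; split => /eqP. Qed.

Lemma s_isE nu x : x != 100 -> (sat nu nu2 (isEf x) <-> sort (nu x) = 2).
Proof.
move=> x100 /=; split => [[u]|]; first by rewrite updE updN //; case: (nu x); case: u.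
case Hx: (nu x) => [v|E] /=; first by case: ifP.
move=> _; have [a [b [aA _ HE]]] := edge_shape hA E.
by exists (inl a); rewrite updE updN // Hx /= HE !inE eqxx.
Qed.

Lemma s_isB nu x : x != 100 -> (sat nu nu2 (isBf x) <-> sort (nu x) = 1).
Proof.
move=> x100; change (~ sat nu nu2 (isAf x) /\ ~ sat nu nu2 (isEf x) <-> sort (nu x) = 1).
rewrite s_isA s_isE //.
by case: (nu x) => [v|E] /=; [case: (v \in A)|]; split=> // -[].
Qed.

Lemma s_edge_in nu X x y a b (aA : a \in A) (bA : b \notin A) :
  x != 101 -> y != 101 -> nu x = inl a -> nu y = inl b ->
  (sat nu nu2 (edge_inf X x y) <-> inr (edge aA bA) \in nu2 X).
Proof.
move=> x1 y1 hx hy /=; split=> [[u]|H].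
  rewrite !updE !updN // hx hy => -[ua [ub uX]].
  by rewrite -(edge_between hA aA bA ua ub).
by exists (inr (edge aA bA)); rewrite !updE !updN // hx hy /= !inE !eqxx orbT.
Qed.

Lemma s_leA nu x y a a' (aA : a \in A) (a'A : a' \in A) :
  x \notin [:: 101; 102] -> y \notin [:: 101; 102] -> nu x = inl a -> nu y = inl a' ->
  (sat nu nu2 (leAf x y) <-> rA a <= rA a').
Proof.
move=> /notin2[x1 x2] /notin2[y1 y2] hx hy.
have s_rank z c (cA : c \in A) b (bA : b \notin A) : nu z = inl c -> z != 101 -> z != 102 ->
    sat (upd nu 102 (inl b)) nu2 (edge_inf 1 z 102) <-> rB b <= rA c.
  move=> hz z1 z2; rewrite (@s_edge_in _ 1 z 102 c b cA bA) ?updE ?updN //.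
  by rewrite nu2_rank edges_withE.
change (sat nu nu2 (leAf x y)) with (forall z, sat (upd nu 102 z) nu2
   (MImp (isBf 102) (MImp (edge_inf 1 x 102) (edge_inf 1 y 102)))).
split=> [le|le [b|E]]; last by rewrite sat_imp s_isB // updE.
- have [b bA rb] := rB_onto (leq_trans (rA_lt aA) nm).
  have := le (inl b); rewrite !sat_imp s_isB // updE sort_B //.
  by rewrite (s_rank x a aA b bA) // (s_rank y a' a'A b bA) // rb; apply.
- rewrite !sat_imp s_isB // updE.
  have [bA|bA] := boolP (b \in A); first by rewrite sort_A.
  rewrite (s_rank x a aA b bA) // (s_rank y a' a'A b bA) // => _.
  by move/leq_trans; apply.
Qed.

Lemma s_ltA nu x y a a' (aA : a \in A) (a'A : a' \in A) :
  x \notin [:: 101; 102] -> y \notin [:: 101; 102] -> nu x = inl a -> nu y = inl a' ->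
  (sat nu nu2 (ltAf x y) <-> rA a < rA a').
Proof.
move=> fx fy hx hy.
change (sat nu nu2 (leAf x y) /\ ~ nu x = nu y <-> rA a < rA a').
rewrite (s_leA aA a'A fx fy hx hy) hx hy ltn_neqAle andbC.
split=> [[-> ne]|/andP[-> ne]]; last by split=> // -[aa']; rewrite aa' eqxx in ne.
by apply/eqP => /(rA_inj aA a'A) aa'; apply: ne; rewrite aa'.
Qed.

Lemma s_bitB nu x b j : b \notin A -> j < s -> nu x = inl b ->
  (sat nu nu2 (bitBf x j) <-> bitn (rB b) j).
Proof. by move=> bA js hx; rewrite /= nu2_bit // hx bit_param_vertex. Qed.

Lemma s_bitE nu p x a b j (aA : a \in A) (bA : b \notin A) :
  p != 101 -> x != 101 -> j < s -> nu p = inl a -> nu x = inl b ->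
  (sat nu nu2 (bitEf p x j) <-> bitn (rB b) (s * (rA a).+1 + j)).
Proof.
move=> p1 x1 js hp hx; rewrite (@s_edge_in nu j.+2 p x a b aA bA) //.
by rewrite nu2_bit // bit_param_edge.
Qed.

Lemma s_agreeB nu x y b b' k : b \notin A -> b' \notin A -> k <= s ->
  nu x = inl b -> nu y = inl b' ->
  (sat nu nu2 (bigAnd [seq agreeBf x y j | j <- iota 0 k]) <->
   forall j, j < k -> bitn (rB b) j = bitn (rB b') j).
Proof.
move=> bA b'A ks hx hy; rewrite sat_bigAnd.
have s_agree j : j < k -> sat nu nu2 (agreeBf x y j) <-> bitn (rB b) j = bitn (rB b') j.
  move=> jk; have js := leq_trans jk ks.
  by rewrite sat_iff (s_bitB bA js hx) (s_bitB b'A js hy) bool_iff.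
split=> H j; first by move=> jk; apply/(s_agree j jk)/H; rewrite mem_iota.
by rewrite mem_iota add0n => /andP[_ jk]; apply/(s_agree j jk)/H.
Qed.

Lemma s_agreeE nu p x y a b b' k (aA : a \in A) (bA : b \notin A) (b'A : b' \notin A) :
  p != 101 -> x != 101 -> y != 101 -> k <= s ->
  nu p = inl a -> nu x = inl b -> nu y = inl b' ->
  (sat nu nu2 (bigAnd [seq agreeEf p x y j | j <- iota 0 k]) <->
   forall j, j < k ->
     bitn (rB b) (s * (rA a).+1 + j) = bitn (rB b') (s * (rA a).+1 + j)).
Proof.
move=> p1 x1 y1 ks hp hx hy; rewrite sat_bigAnd.
have s_agree j : j < k -> sat nu nu2 (agreeEf p x y j) <->
    bitn (rB b) (s * (rA a).+1 + j) = bitn (rB b') (s * (rA a).+1 + j).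
  move=> jk; have js := leq_trans jk ks.
  by rewrite sat_iff (s_bitE aA bA p1 x1 js hp hx) (s_bitE aA b'A p1 y1 js hp hy) bool_iff.
split=> H j; first by move=> jk; apply/(s_agree j jk)/H; rewrite mem_iota.
by rewrite mem_iota add0n => /andP[_ jk]; apply/(s_agree j jk)/H.
Qed.

Section Labels.
Variables (b b' : V).
Hypotheses (bA : b \notin A) (b'A : b' \notin A).
Local Notation bx := (bitn (rB b)).
Local Notation by_ := (bitn (rB b')).

Lemma s_diffB nu x y : nu x = inl b -> nu y = inl b' ->
  (sat nu nu2 (diffBf x y) <-> exists2 j, j < s & diff_at bx by_ j).
Proof.
move=> hx hy; rewrite sat_bigOr.
have s_at j : j < s -> sat nu nu2 (MAnd (MNot (bitBf x j))
    (MAnd (bitBf y j) (bigAnd [seq agreeBf x y j' | j' <- iota 0 j]))) <-> diff_at bx by_ j.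
  move=> js; rewrite /diff_at -(s_bitB bA js hx) -(s_bitB b'A js hy).
  by rewrite -(s_agreeB bA b'A (ltnW js) hx hy).
split=> [[j]|[j js d]].
  by rewrite mem_iota add0n => /andP[_ js] /(s_at j js) d; exists j.
by exists j; [rewrite mem_iota add0n|apply/(s_at j js)].
Qed.

Lemma s_earlier nu x y a (aA : a \in A) :
  x \notin [:: 101; 104] -> y \notin [:: 101; 104] ->
  nu 103 = inl a -> nu x = inl b -> nu y = inl b' ->
  (sat nu nu2 (earlierf x y) <-> forall q j, q < rA a -> j < s ->
     bx (s * q.+1 + j) = by_ (s * q.+1 + j)).
Proof.
move=> /notin2[x1 x4] /notin2[y1 y4] ha hx hy.
change (sat nu nu2 (earlierf x y)) with (forall z, sat (upd nu 104 z) nu2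
  (MImp (isAf 104) (MImp (ltAf 104 103) (bigAnd [seq agreeEf 104 x y j | j <- iota 0 s])))).
have s_block c (cA : c \in A) : sat (upd nu 104 (inl c)) nu2 (MImp (isAf 104)
    (MImp (ltAf 104 103) (bigAnd [seq agreeEf 104 x y j | j <- iota 0 s]))) <->
    (rA c < rA a -> forall j, j < s -> bx (s * (rA c).+1 + j) = by_ (s * (rA c).+1 + j)).
  rewrite !sat_imp s_isA updE sort_A // (s_ltA cA aA) ?updE ?updN //.
  rewrite (s_agreeE cA bA b'A) ?updE ?updN //.
  by split=> H; [apply: H|move=> _; apply: H].
split=> H => [q j qa js|[c|E]]; last by rewrite sat_imp s_isA updE.
  have [c cA rc] := rA_onto (ltn_trans qa (rA_lt aA)).
  by rewrite -rc; apply: (proj1 (s_block c cA) (H (inl c))); rewrite ?rc.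
have [cA|cA] := boolP (c \in A); last by rewrite sat_imp s_isA updE sort_B.
by apply/(s_block c cA) => ca j js; apply: H.
Qed.

Lemma s_diffE_at nu x y a (aA : a \in A) j :
  x \notin [:: 101; 103; 104] -> y \notin [:: 101; 103; 104] -> j < s ->
  nu 103 = inl a -> nu x = inl b -> nu y = inl b' ->
  (sat nu nu2 (diffE_at x y j) <-> diff_at bx by_ (s * (rA a).+1 + j)).
Proof.
move=> fx fy js ha hx hy; have [x1 x3 x4] := notin3 fx; have [y1 y3 y4] := notin3 fy.
rewrite /diff_at (@block_below s (rA a) j (fun i => bx i = by_ i) js).
rewrite -(@s_bitE nu 103 x a b j aA bA isT x1 js ha hx).
rewrite -(@s_bitE nu 103 y a b' j aA b'A isT y1 js ha hy).
have fx' : x \notin [:: 101; 104] by rewrite mem_seq2 negb_or x1 x4.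
have fy' : y \notin [:: 101; 104] by rewrite mem_seq2 negb_or y1 y4.
rewrite -(s_agreeB bA b'A (leqnn s) hx hy) -(s_earlier aA fx' fy' ha hx hy).
by rewrite -(@s_agreeE nu 103 x y a b b' j aA bA b'A isT x1 y1 (ltnW js) ha hx hy).
Qed.

Lemma s_diffE nu x y : x \notin [:: 101; 103; 104] -> y \notin [:: 101; 103; 104] ->
  nu x = inl b -> nu y = inl b' ->
  (sat nu nu2 (diffEf x y) <->
   exists q j, [/\ q < n, j < s & diff_at bx by_ (s * q.+1 + j)]).
Proof.
move=> fx fy hx hy; have [_ x3 _] := notin3 fx; have [_ y3 _] := notin3 fy.
split=> [[z [/s_isA]]|[q [j [qn js d]]]].
  rewrite updE; case: z => [a|//] /=; case: ifP => // aA _.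
  move/sat_bigOr => -[j]; rewrite mem_iota add0n => /andP[_ js].
  rewrite (s_diffE_at aA fx fy js) ?updE ?updN // => d.
  by exists (rA a), j; split => //; exact: rA_lt.
have [a aA ra] := rA_onto qn.
exists (inl a); split; first by rewrite s_isA updE sort_A.
apply/sat_bigOr; exists j; first by rewrite mem_iota.
by rewrite (s_diffE_at aA fx fy js) ?updE ?updN // ra.
Qed.

Lemma s_ltB nu x y : x \notin [:: 101; 103; 104] -> y \notin [:: 101; 103; 104] ->
  nu x = inl b -> nu y = inl b' ->
  (sat nu nu2 (ltBf x y) <-> first_diff N (rB b) (rB b')).
Proof.
move=> fx fy hx hy; rewrite -(rwP (first_diffP _ _ _)).
change (sat nu nu2 (diffBf x y) \/ sat nu nu2 (diffEf x y) <->
  exists2 i, i < N & diff_at bx by_ i).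
rewrite (s_diffB hx hy) (s_diffE fx fy hx hy).
split=> [[[j js d]|[q [j [qn js d]]]]|[i iN d]].
- by exists j => //; apply: leq_trans js _; rewrite leq_pmulr ?addn1.
- by exists (s * q.+1 + j) => //; nia.
- have [si|[q [j [qn js ei]]]] := block_decomp iN; first by left; exists i.
  by right; exists q, j; rewrite -ei.
Qed.

End Labels.

Lemma s_ends nu z x y a b (aA : a \in A) (bA : b \notin A) :
  x != 100 -> y != 100 -> nu z = inr (edge aA bA) ->
  (sat nu nu2 (endsf z x y) <-> nu x = inl a /\ nu y = inl b).
Proof.
move=> x0 y0 hz.
change (sat nu nu2 (isAf x) /\ sat nu nu2 (isBf y) /\ inc (nu x) (nu z) /\ inc (nu y) (nu z)
  <-> nu x = inl a /\ nu y = inl b).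
rewrite s_isA s_isB // hz; split=> [|[-> ->]]; last first.
  by rewrite sort_A // sort_B //= !inE !eqxx orbT.
case: (nu x) => [a'|?]; case: (nu y) => [b'|?] /=; try by move=> [? [? _]].
case: ifP => [a'A|_ [] //]; case: ifP => [_ [_ []] //|/negbT b'A [_ [_ [a'E b'E]]]].
by rewrite (set2_endA bA a'A a'E) (set2_endB aA b'A b'E).
Qed.

Lemma s_leE nu x y a b a' b' (aA : a \in A) (bA : b \notin A) (a'A : a' \in A)
    (b'A : b' \notin A) :
  x \notin [:: 10; 11; 12; 13] -> y \notin [:: 10; 11; 12; 13] ->
  nu x = inr (edge aA bA) -> nu y = inr (edge a'A b'A) ->
  (sat nu nu2 (leEf x y) <-> ltB b b' \/ b = b' /\ rA a <= rA a').
Proof.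
rewrite !inE => /norP[x10 /norP[x11 /norP[x12 x13]]].
move=> /norP[y10 /norP[y11 /norP[y12 y13]]] hx hy.
pose nu' z1 z2 z3 z4 := upd (upd (upd (upd nu 10 z1) 11 z2) 12 z3) 13 z4.
change (sat nu nu2 (leEf x y)) with (exists z1 z2 z3 z4, sat (nu' z1 z2 z3 z4) nu2
  (MAnd (endsf x 10 11) (MAnd (endsf y 12 13)
  (MOr (ltBf 11 13) (MAnd (MEq 11 13) (leAf 10 12)))))).
have ex z1 z2 z3 z4 : nu' z1 z2 z3 z4 x = inr (edge aA bA) by rewrite /nu' !updN.
have ey z1 z2 z3 z4 : nu' z1 z2 z3 z4 y = inr (edge a'A b'A) by rewrite /nu' !updN.
split=> [[z1 [z2 [z3 [z4 []]]]]|H].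
  move=> /(@s_ends _ x 10 11 a b aA bA isT isT (ex _ _ _ _))[e10 e11].
  move=> [/(@s_ends _ y 12 13 a' b' a'A b'A isT isT (ey _ _ _ _))[e12 e13]].
  case=> [/(s_ltB bA b'A (x := 11) (y := 13) isT isT e11 e13) lt|[same le]].
    by left.
  right; split; first by move: same; rewrite e11 e13 => -[].
  by move: le => /(s_leA aA a'A (x := 10) (y := 12) isT isT e10 e12).
exists (inl a), (inl b), (inl a'), (inl b').
split; first exact/(@s_ends _ x 10 11 a b aA bA isT isT (ex _ _ _ _)).
split; first exact/(@s_ends _ y 12 13 a' b' a'A b'A isT isT (ey _ _ _ _)).
case: H => [lt|[-> le]].
  by left; apply/(s_ltB bA b'A (x := 11) (y := 13) isT isT).
by right; split; last by apply/(s_leA aA a'A (x := 10) (y := 12) isT isT).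
Qed.

Section Phi.
Variables (u w : U).
Local Notation nu := (fun i : nat => if i == 0 then u else w).

Lemma s_sort_lt : sat nu nu2 sort_ltf <-> sort u < sort w.
Proof.
change ((sat nu nu2 (isAf 0) /\ ~ sat nu nu2 (isAf 1)) \/
        (sat nu nu2 (isBf 0) /\ sat nu nu2 (isEf 1)) <-> sort u < sort w).
rewrite !s_isA s_isB // s_isE //=.
by case: (sort_cases u) => ->; case: (sort_cases w) => ->; lia.
Qed.

Lemma le_sortA : sort u = 0 -> sort w = 0 ->
  (sat nu nu2 (leAf 0 1) <-> key u <= key w).
Proof.
case: u => [a|//] su; case: w => [a'|//] sw.
have aA : a \in A by move: su => /=; case: ifP.
have a'A : a' \in A by move: sw => /=; case: ifP.
by rewrite (s_leA aA a'A (x := 0) (y := 1) isT isT erefl erefl) !key_A.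
Qed.

Lemma le_sortB : sort u = 1 -> sort w = 1 ->
  (u = w \/ sat nu nu2 (ltBf 0 1) <-> key u <= key w).
Proof.
case: u => [b|//] su; case: w => [b'|//] sw.
have bA : b \notin A by move: su => /=; case: ifP.
have b'A : b' \notin A by move: sw => /=; case: ifP.
rewrite (s_ltB bA b'A (x := 0) (y := 1) isT isT erefl erefl) !key_B // leq_add2l.
rewrite leq_eqVlt -(kB_lt bA b'A).
split=> [[[<-]|lt]|/orP[/eqP/(kB_inj bA b'A)->|lt]]; [|by apply/orP; right|by left|by right].
by rewrite eqxx.
Qed.

Lemma le_sortE : sort u = 2 -> sort w = 2 ->
  (sat nu nu2 (leEf 0 1) <-> key u <= key w).
Proof.
case: u => [v|E]; first by rewrite /=; case: ifP.
case: w => [v'|E'] _; first by rewrite /=; case: ifP.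
have [a [b [aA [bA ->]]]] := edge_of_onto hA E.
have [a' [b' [a'A [b'A ->]]]] := edge_of_onto hA E'.
rewrite (s_leE (x := 0) (y := 1) isT isT erefl erefl) !key_edge leq_add2l.
rewrite mixed_radix_le ?rA_lt // -(kB_lt bA b'A).
split=> [[lt|[<- le]]|/orP[lt|/andP[/eqP/(kB_inj bA b'A) <- le]]].
- by rewrite lt.
- by rewrite eqxx le orbT.
- by left.
- by right.
Qed.

Lemma s_same_sort_le : sat nu nu2 same_sort_lef <-> sort u = sort w /\ key u <= key w.
Proof.
change ((sat nu nu2 (isAf 0) /\ sat nu nu2 (isAf 1) /\ sat nu nu2 (leAf 0 1)) \/
  ((sat nu nu2 (isBf 0) /\ sat nu nu2 (isBf 1) /\ (u = w \/ sat nu nu2 (ltBf 0 1))) \/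
   (sat nu nu2 (isEf 0) /\ sat nu nu2 (isEf 1) /\ sat nu nu2 (leEf 0 1)))
  <-> sort u = sort w /\ key u <= key w).
rewrite !s_isA !s_isB // !s_isE // [nu 0]/= [nu 1]/=.
split=> [[[su [sw le]]|[[su [sw le]]|[su [sw le]]]]|[ss le]].
- by rewrite -(le_sortA su sw) su sw.
- by rewrite -(le_sortB su sw) su sw.
- by rewrite -(le_sortE su sw) su sw.
case: (sort_cases u) => su; rewrite su in ss.
- by left; rewrite (le_sortA su (esym ss)).
- by right; left; rewrite (le_sortB su (esym ss)).
- by right; right; rewrite (le_sortE su (esym ss)).
Qed.

Lemma sem_phi : sat nu nu2 phi <-> key u <= key w.
Proof.
change (sat nu nu2 sort_ltf \/ sat nu nu2 same_sort_lef <-> key u <= key w).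
rewrite s_sort_lt s_same_sort_le.
split=> [[/key_sort/ltnW //|[]//]|le].
case: (ltngtP (sort u) (sort w)) => [lt|gt|eq]; [by left|exfalso|by right].
by have := key_sort gt; rewrite ltnNge le.
Qed.

End Phi.
End Semantics.
End Construction.

Lemma order_for (V : finType) (e : rel V) (A : {set V})
    (hA : forall x y, e x y = ((x \in A) != (y \in A))) s :
  #|A| <= #|~: A| -> #|~: A| <= 2 ^ (s * (#|A| + 1)) ->
  exists P : 'I_s.+2 -> {set inc_univ e},
    linear_order (defined_rel (@inc V e) P (phi s)).
Proof.
move=> nm mbound.
pose params i := if i == 0 then side_param e A
  else if i == 1 then rank_param e A else bit_param e A s i.-2.
exists (fun i : 'I_s.+2 => params (val i)).
have sem u w : defined_rel (@inc V e) (fun i : 'I_s.+2 => params (val i)) (phi s) u w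
    <-> key A s u <= key A s w.
  by apply: (sem_phi hA nm mbound) => [||j js]; rewrite insubT.
split=> [u|u w /sem le1 /sem le2|u v w /sem le1 /sem le2|u w].
- exact/sem.
- by apply: (key_inj hA mbound); apply/anti_leq; rewrite le1 le2.
- exact/sem/(leq_trans le1 le2).
- by case: (leqP (key A s u) (key A s w)) => le; [left; apply/sem|right; apply/sem/ltnW].
Qed.

Definition scoped (L : seq nat) (K : nat) (f : mso) : bool :=
  all (fun i => i \in L) (fv1 f) && all (fun i => i < K) (fv2 f).

Section Scoped.
Variables (L : seq nat) (K : nat).

Lemma scoped_not f : scoped L K f -> scoped L K (MNot f).
Proof. exact: id. Qed.

Lemma scoped_and f g : scoped L K f -> scoped L K g -> scoped L K (MAnd f g).
Proof. by rewrite /scoped /= !all_cat => /andP[-> ->] /andP[-> ->]. Qed.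

Lemma scoped_or f g : scoped L K f -> scoped L K g -> scoped L K (MOr f g).
Proof. by rewrite /scoped /= !all_cat => /andP[-> ->] /andP[-> ->]. Qed.

Lemma scoped_bind x f : scoped (x :: L) K f ->
  all (fun i => i \in L) [seq i <- fv1 f | i != x] && all (fun i => i < K) (fv2 f).
Proof.
case/andP => /allP f1 ->; rewrite andbT; apply/allP => i.
by rewrite mem_filter => /andP[ix /f1]; rewrite inE (negPf ix).
Qed.

Lemma scoped_ex1 x f : scoped (x :: L) K f -> scoped L K (MEx1 x f).
Proof. exact: scoped_bind. Qed.

Lemma scoped_all1 x f : scoped (x :: L) K f -> scoped L K (MAll1 x f).
Proof. exact: scoped_bind. Qed.

Hypothesis L0 : 0 \in L.

Lemma scoped_bigAnd (g : nat -> mso) (l : seq nat) :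
  (forall j, j \in l -> scoped L K (g j)) -> scoped L K (bigAnd (map g l)).
Proof.
elim: l => [|j l IH] H /=; first by rewrite /scoped /= L0.
apply: scoped_and; first by apply: H; rewrite inE eqxx.
by apply: IH => i il; apply: H; rewrite inE il orbT.
Qed.

Lemma scoped_bigOr (g : nat -> mso) (l : seq nat) :
  (forall j, j \in l -> scoped L K (g j)) -> scoped L K (bigOr (map g l)).
Proof.
elim: l => [|j l IH] H /=; first by rewrite /scoped /= L0.
apply: scoped_or; first by apply: H; rewrite inE eqxx.
by apply: IH => i il; apply: H; rewrite inE il orbT.
Qed.

End Scoped.

Ltac scoped_tac := repeat first
  [ apply: scoped_bigAnd => //; move=> ?; rewrite mem_iota => /andP[_ ?]
  | apply: scoped_bigOr => //; move=> ?; rewrite mem_iota => /andP[_ ?]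
  | apply: scoped_not | apply: scoped_and | apply: scoped_or
  | apply: scoped_ex1 | apply: scoped_all1
  | by rewrite /scoped /= ?andbT; lia ].

Lemma phi_free s : mso_free_in s.+2 (phi s).
Proof.
suff /andP[f1 f2] : scoped [:: 0; 1] s.+2 (phi s).
  by rewrite /mso_free_in f2 andbT; apply: sub_all f1 => i; rewrite !inE => /orP[]/eqP->.
rewrite /phi /sort_ltf /same_sort_lef /leEf /endsf /ltBf /diffBf /diffEf /diffE_at
  /earlierf /agreeBf /agreeEf /bitBf /bitEf /ltAf /leAf /edge_inf /isBf /isEf /isAf
  /MIff /MImp.
scoped_tac.
Qed.

Lemma bounded_orderable (C : forall V : finType, rel V -> Prop)
  (HC : forall (V : finType) (e : rel V), C V e -> exists n m, is_Knm e n m) :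
  (exists s : nat, forall (V : finType) (e : rel V) (n m : nat),
    C V e -> is_Knm e n m -> n <= m -> m <= 2 ^ (s * (n + 1))) -> MSO2_orderable C.
Proof.
move=> [s bounded]; exists s.+2, (phi s); split; first exact: phi_free.
move=> V e CVe _; have [n [m [A0 [_ _ hA0]]]] := HC V e CVe.
have [A [hA nm]] : exists A : {set V},
    (forall x y, e x y = ((x \in A) != (y \in A))) /\ #|A| <= #|~: A|.
  case: (leqP #|A0| #|~: A0|) => small; first by exists A0.
  exists (~: A0); split; last by rewrite setCK ltnW.
  by move=> x y; rewrite !inE hA0; case: (x \in A0); case: (y \in A0).
have mbound : #|~: A| <= 2 ^ (s * (#|A| + 1)) by apply: (bounded V e) => //; exists A.
exact: (order_for hA nm mbound).
Qed.

Theorem lemma4p26 (C : forall V : finType, rel V -> Prop)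
  (HC : forall (V : finType) (e : rel V), C V e -> exists n m, is_Knm e n m) :
  MSO2_orderable C <->
  exists s : nat, forall (V : finType) (e : rel V) (n m : nat),
    C V e -> is_Knm e n m -> n <= m -> m <= 2 ^ (s * (n + 1)).
Proof. split; [exact: orderable_bounded|exact: bounded_orderable]. Qed.
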